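(* Let $\theta_1\in[0,2\pi)$, $d\in\mathbb{Z}_+$, $k\in\mathbb{Z}_+$, and let $\alpha=(\alpha_n)_{n\ge0}\in\mathbb{D}^\infty$ satisfy $(S-e^{-i\theta_1})^d\alpha\in\ell^2$ and $\alpha\in\ell^{2d+2}$. If $F\in A_{2k}$ satisfies $L_{2k}(F)\ge 2(d+1)-2k$, then $$\sup_{N}\Big|\sum_{n=0}^N[\phi_{2k}(F)]_n\Big|<\infty .$$
   Context: $\mathbb{D}$ is the open unit disk, $(S\alpha)_n:=\alpha_{n+1}$ is the shift. $A_{2k}:=\mathbb{C}[x_1,y_1,\dots,x_k,y_k]$; $\phi_{2k}$ is the linear map from $A_{2k}$ to complex sequences defined on monomials by $[\phi_{2k}(\prod_{i=1}^k x_i^{\beta_i}y_i^{\gamma_i})]_n=\prod_{i=1}^k\alpha_{n+\beta_i}\overline{\alpha_{n+\gamma_i}}$. The degree function $L_{2k}:A_{2k}\setminus\{0\}\to\mathbb{N}$ is defined as follows: expand $F$ uniquely as $F=\sum_{s=1}^M C_s\prod_{p=1}^k(x_p-e^{-i\theta_1})^{\beta_{p,s}}(y_p-e^{i\theta_1})^{\gamma_{p,s}}$ with $C_s\ne0$, $\beta_{p,s},\gamma_{p,s}\in\mathbb{N}$, and the exponent tuples $(\beta_{p,s},\gamma_{p,s})_{1\le p\le k}$ distinct for distinct $s$ (Taylor expansion at the point $x_p=e^{-i\theta_1}$, $y_p=e^{i\theta_1}$); then $L_{2k}(F):=\min_{1\le s\le M}\sum_{p=1}^k\big(\min(\beta_{p,s},d)+\min(\gamma_{p,s},d)\big)$.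 *)

From mathcomp Require Import all_boot all_algebra.
From mathcomp Require Import reals trigo.
From mathcomp Require Import complex.
From mathcomp Require Import mpoly.
Set Implicit Arguments. Unset Strict Implicit. Unset Printing Implicit Defensive.
Import GRing.Theory Num.Theory.
Local Open Scope ring_scope.
Local Open Scope complex_scope.

Section Defs.
Variable R : realType.
Local Notation C := R[i].

Definition expi (t : R) : C := cos t +i* sin t.

Definition shift (a : nat -> C) : nat -> C := fun n => a n.+1.

Definition shift_sub_pow (c : C) (d : nat) (a : nat -> C) : nat -> C :=
  iter d (fun b n => shift b n - c * b n) a.

Definition in_lp (p : nat) (a : nat -> C) : Prop :=
  exists M : C, forall N : nat, \sum_(n < N) `|a n| ^+ p <= M.

(* A_{2k} = C[x_1,y_1,...,x_k,y_k] is {mpoly C[k + k]} with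
   x_p = variable (lshift k p) and y_p = variable (rshift k p). *)
Definition xvar k (p : 'I_k) : 'I_(k + k) := lshift k p.
Definition yvar k (p : 'I_k) : 'I_(k + k) := rshift k p.

Definition phi k (alpha : nat -> C) (F : {mpoly C[k + k]}) : nat -> C :=
  fun n => \sum_(m <- msupp F)
     F@_m * \prod_(p < k) (alpha (n + m (xvar p))%N * (alpha (n + m (yvar p))%N)^*).

(* Taylor expansion at x_p = e^{-i theta}, y_p = e^{i theta}:
   the polynomial G with F(X) = G(X - point), i.e. G(Z) = F(Z + point). *)
Definition taylor_point k (theta : R) (i : 'I_(k + k)) : C :=
  match split i with
  | inl _ => expi (- theta)
  | inr _ => expi theta
  end.

Definition taylor_shift k (theta : R) (F : {mpoly C[k + k]}) : {mpoly C[k + k]} :=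
  comp_mpoly [tuple ('X_i + (@taylor_point k theta i)%:MP) | i < k + k] F.

Definition Lweight k (d : nat) (m : 'X_{1..k + k}) : nat :=
  \sum_(p < k) (minn (m (xvar p)) d + minn (m (yvar p)) d).

(* L_{2k}(F): min of weights over the monomials of the Taylor expansion
   (value 0 for F = 0, where L is undefined) *)
Definition L2k k (theta : R) (d : nat) (F : {mpoly C[k + k]}) : nat :=
  match msupp (taylor_shift theta F) with
  | [::] => 0%N
  | m0 :: s => \big[minn/Lweight d m0]_(m <- s) Lweight d m
  end.

End Defs.

(* Expanding F at x_p = e^{-iθ}, y_p = e^{iθ} writes [phi F]_n as a finite
   combination of products of the sequences (S - e^{-iθ})^j α and
   (S - e^{iθ})^j ᾱ, evaluated at n.  After the modulation a_n = e^{inθ} α_n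
   these become plain differences Δ^j a up to unimodular factors.  A discrete
   Gagliardo–Nirenberg inequality (summation by parts plus Young's inequality,
   with the small term absorbed downwards from j = d) interpolates between
   a ∈ ℓ^{2d+2} and Δ^d a ∈ ℓ^2: |Δ^j a|^{(2d+2)/(min(j,d)+1)} is summable for
   every j.  The hypothesis on L_{2k}(F) says exactly that in every product
   the exponents min(j,d)+1 add up to at least 2d+2, so every product is
   summable, and the partial sums of [phi F] are even absolutely bounded. *)

From mathcomp Require Import all_boot all_algebra.
From mathcomp Require Import reals trigo.
From mathcomp Require Import complex.
From mathcomp Require Import mpoly.
Import GRing.Theory Num.Theory.
Local Open Scope ring_scope.
Local Open Scope complex_scope.

From HB Require Import structures.
From mathcomp Require Import all_order.
From mathcomp Require exp.
From mathcomp Require Import ring lra zify.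
From mathcomp.multinomials Require Import ssrcomplements.
Set Implicit Arguments.
Unset Strict Implicit.
Unset Printing Implicit Defensive.
Import Order.TTheory.

Section RealInequalities.
Variable R : realFieldType.

Lemma ler_1Dexpr (r : R) m : 0 <= r -> (0 < m)%N -> r <= 1 + r ^+ m.
Proof.
move=> r0 m0; case: (lerP r 1) => h.
  by rewrite (le_trans h) // lerDl exprn_ge0.
by rewrite (le_trans (ler_eXnr m0 (ltW h))) // lerDr.
Qed.

Lemma ler_exprD2 (x y : R) n : 0 <= x -> 0 <= y ->
  (x + y) ^+ n <= 2 ^+ n * (x ^+ n + y ^+ n).
Proof.
move=> x0 y0; wlog xy : x y x0 y0 / x <= y.
  move=> wlog_xy; case: (lerP x y) => h; first exact: wlog_xy.
  by rewrite addrC [x ^+ n + _]addrC wlog_xy // ltW.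
rewrite (@le_trans _ _ ((2 * y) ^+ n)) //.
  by rewrite lerXn2r ?nnegrE ?addr_ge0 ?mulr_ge0 // mulr2n mulrDl mul1r lerD2r.
by rewrite exprMn ler_pM2l ?exprn_gt0 // lerDr exprn_ge0.
Qed.

Lemma ler_expr_sum n K (x : 'I_K -> R) : (0 < n)%N -> (forall i, 0 <= x i) ->
  (\sum_i x i) ^+ n <= 2 ^+ (n * K) * \sum_i x i ^+ n.
Proof.
move=> n0; elim: K x => [|K IH] x x0.
  by rewrite !big_ord0 expr0n gtn_eqF //= mulr0.
have S0 : 0 <= \sum_(i < K) x (lift ord0 i) by apply: sumr_ge0.
rewrite !big_ord_recl (le_trans (ler_exprD2 n (x0 ord0) S0)) //.
rewrite mulnS exprD !mulrDr lerD //.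
  by rewrite mulrAC ler_peMr ?mulr_ge0 ?exprn_ge0 ?exprn_ege1 ?ler1n.
by rewrite -mulrA ler_wpM2l ?exprn_ge0 // IH.
Qed.

Lemma ler_expr3_sum (p q r : R) a b c : 0 <= p -> 0 <= q -> 0 <= r ->
  p ^+ a * q ^+ b * r ^+ c <=
  p ^+ (a + b + c) + q ^+ (a + b + c) + r ^+ (a + b + c).
Proof.
move=> p0 q0 r0; set M := Num.max p (Num.max q r).
have pM : p <= M by rewrite le_max lexx.
have qM : q <= M by rewrite !le_max lexx orbT.
have rM : r <= M by rewrite !le_max lexx !orbT.
have M0 : 0 <= M by apply: le_trans pM.
have le_M : p ^+ a * q ^+ b * r ^+ c <= M ^+ (a + b + c).
  by rewrite !exprD !ler_pM ?mulr_ge0 ?exprn_ge0 ?lerXn2r.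
apply: (le_trans le_M).
have := exprn_ge0 (a + b + c) p0; have := exprn_ge0 (a + b + c) q0.
have := exprn_ge0 (a + b + c) r0.
by rewrite /M !maxEle; case: ifP => _; [case: ifP => _|]; lra.
Qed.

(* Young's inequality with a small weight [s] on the last two factors:
   apply [ler_expr3_sum] to [s^-(b+c) x], [s^a y] and [s^a z]. *)
Lemma ler_expr3_sum_eps (x y z s : R) a b c : 0 <= x -> 0 <= y -> 0 <= z ->
  0 < s -> s <= 1 -> (0 < a)%N ->
  x ^+ a * y ^+ b * z ^+ c <=
   s^-1 ^+ ((b + c) * (a + b + c)) * x ^+ (a + b + c)
   + s * (y ^+ (a + b + c) + z ^+ (a + b + c)).
Proof.
move=> x0 y0 z0 s0 s1 a0; set W := (a + b + c)%N.
set l := s^-1 ^+ (b + c); set mu := s ^+ a.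
have l0 : 0 <= l by rewrite exprn_ge0 // invr_ge0 ltW.
have mu0 : 0 <= mu by rewrite exprn_ge0 // ltW.
have rescale : x ^+ a * y ^+ b * z ^+ c =
    (l * x) ^+ a * (mu * y) ^+ b * (mu * z) ^+ c.
  have lmu : l ^+ a * mu ^+ (b + c) = 1.
    rewrite -!exprM exprVn mulnC mulVf // expf_eq0 gt_eqF //.
    by rewrite andbF.
  by rewrite !exprMn -[LHS]mul1r -lmu exprD; ring.
have muW : mu ^+ W <= s.
  have aW : (0 < a * W)%N by rewrite muln_gt0 a0 /W !addn_gt0 a0.
  rewrite -exprM -(prednK aW) exprS.
  by rewrite ler_piMr ?exprn_ile1 // ltW.
rewrite rescale (le_trans (ler_expr3_sum a b c _ _ _)) ?mulr_ge0 // -/W.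
rewrite !exprMn -exprM.
have := ler_wpM2r (exprn_ge0 W y0) muW; have := ler_wpM2r (exprn_ge0 W z0) muW.
lra.
Qed.

Lemma ler_subXX_mul (X Y : R) q m : 0 <= Y -> Y <= X -> (0 < m)%N ->
  (X ^+ q - Y ^+ q) * Y ^+ m <= q%:R * X ^+ q * (X ^+ m - Y ^+ m).
Proof.
move=> Y0 YX m0; have X0 : 0 <= X by apply: le_trans YX.
have XY0 : 0 <= X - Y by rewrite subr_ge0.
case: q => [|q]; first by rewrite subrr !mul0r.
have le_subXq : X ^+ q.+1 - Y ^+ q.+1 <= (X - Y) * (q.+1%:R * X ^+ q).
  have le_term (i : 'I_q.+1) : X ^+ (q.+1.-1 - i) * Y ^+ i <= X ^+ q.
    rewrite (le_trans (ler_wpM2l (exprn_ge0 _ X0) (lerXn2r i _ _ YX)))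
      ?nnegrE //.
    by rewrite -exprD subnK // -ltnS.
  rewrite subrXX ler_wpM2l // (le_trans (ler_sum _ (fun i _ => le_term i))) //.
  by rewrite sumr_const card_ord mulr_natl.
case: m m0 => // m _.
have ge_subXm : (X - Y) * X ^+ m <= X ^+ m.+1 - Y ^+ m.+1.
  rewrite subrXX ler_wpM2l // big_ord_recl /= subn0 expr0 mulr1 lerDl.
  by apply: sumr_ge0 => i _; rewrite mulr_ge0 ?exprn_ge0.
apply: (le_trans (ler_wpM2r (exprn_ge0 _ Y0) le_subXq)).
apply: (le_trans (ler_wpM2l _ (lerXn2r m.+1 _ _ YX)));
  rewrite ?nnegrE ?mulr_ge0 ?exprn_ge0 //.
have -> : (X - Y) * (q.+1%:R * X ^+ q) * X ^+ m.+1 =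
    q.+1%:R * X ^+ q.+1 * ((X - Y) * X ^+ m) by rewrite !exprS; ring.
by apply: ler_wpM2l; rewrite ?mulr_ge0 ?exprn_ge0.
Qed.

End RealInequalities.

Definition rootR (R : realType) (m : nat) (x : R) : R := exp.powR x m%:R^-1.

Section Root.
Variable R : realType.

Lemma rootR_ge0 m (x : R) : 0 <= rootR m x.
Proof. exact: exp.powR_ge0. Qed.

Lemma rootRK m (x : R) : (0 < m)%N -> 0 <= x -> rootR m x ^+ m = x.
Proof.
move=> m0 x0; rewrite /rootR -exp.powR_mulrn ?exp.powR_ge0 // -exp.powRrM.
by rewrite mulVf ?pnatr_eq0 -?lt0n // exp.powRr1.
Qed.

Lemma rootR1 (x : R) : 0 <= x -> rootR 1 x = x.
Proof. by move=> x0; rewrite -[LHS]expr1 rootRK. Qed.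

End Root.

(* The real-valued modulus; [`|z|] on [R[i]] takes its values in [R[i]]. *)
Local Notation normc := Normc.normc.

Section ComplexNorm.
Variable R : rcfType.
Implicit Types x y z : R[i].

Lemma normcE z : `|z| = (normc z)%:C.
Proof. by []. Qed.

Lemma normc_ge0 z : 0 <= normc z.
Proof. by rewrite -lecR -normcE normr_ge0. Qed.

Lemma normc_conj z : normc z^* = normc z.
Proof. by case: z => a b; rewrite /= sqrrN. Qed.

Lemma normc_real (x : R) : normc x%:C = `|x|.
Proof. by rewrite /= expr0n /= addr0 sqrtr_sqr. Qed.

Lemma normcB_sym x y : normc (x - y) = normc (y - x).
Proof. by rewrite -normcN opprB. Qed.

Lemma normcB_le x y : normc (x - y) <= normc x + normc y.
Proof. by rewrite (le_trans (le_normcD _ _)) // normcN. Qed.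

Lemma lerB_normc x y : normc x - normc y <= normc (x - y).
Proof. by rewrite lerBlDr -[x in normc x](subrK y) le_normcD. Qed.

Lemma mulcJ_normc z : z * z^* = (normc z ^+ 2)%:C.
Proof.
case: z => a b; rewrite /= sqr_sqrtr ?addr_ge0 ?sqr_ge0 //.
by apply/eqP; rewrite eq_complex /=; apply/andP; split; apply/eqP; ring.
Qed.

Lemma normc_sum_le (I : Type) (s : seq I) (F : I -> R[i]) :
  normc (\sum_(i <- s) F i) <= \sum_(i <- s) normc (F i).
Proof.
elim: s => [|x s IH]; first by rewrite !big_nil Normc.normc0.
by rewrite !big_cons (le_trans (le_normcD _ _)) // lerD2l.
Qed.

Lemma normc_prod (I : Type) (s : seq I) (F : I -> R[i]) :
  normc (\prod_(i <- s) F i) = \prod_(i <- s) normc (F i).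
Proof.
elim: s => [|x s IH]; first by rewrite !big_nil Normc.normc1.
by rewrite !big_cons Normc.normcM IH.
Qed.

Lemma normcX z n : normc (z ^+ n) = normc z ^+ n.
Proof. by rewrite -(card_ord n) -!prodr_const normc_prod. Qed.

End ComplexNorm.

Section RootConj.
Variables (R : realType) (m q : nat).
Hypothesis m_gt0 : (0 < m)%N.

Definition rootXJ (z : R[i]) : R[i] := (rootR m (normc z) ^+ q)%:C * z^*.

Lemma mul_rootXJ z : z * rootXJ z = (rootR m (normc z) ^+ (q + m * 2))%:C.
Proof.
rewrite /rootXJ mulrCA mulcJ_normc; set X := rootR m (normc z).
by rewrite -[normc z](rootRK m_gt0 (normc_ge0 z)) -/X -rmorphM -exprM -exprD.
Qed.

Lemma normc_rootXJB z1 z2 :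
  normc (rootXJ z1 - rootXJ z2)
  <= q.+1%:R * (rootR m (normc z1) + rootR m (normc z2)) ^+ q * normc (z1 - z2).
Proof.
wlog le21 : z1 z2 / rootR m (normc z2) <= rootR m (normc z1).
  move=> wlog_le; case: (lerP (rootR m (normc z2)) (rootR m (normc z1))) => h.
    exact: wlog_le.
  rewrite normcB_sym [normc (z1 - _)]normcB_sym [rootR m _ + _]addrC.
  by rewrite wlog_le // ltW.
rewrite /rootXJ; set X1 := rootR m (normc z1); set X2 := rootR m (normc z2).
have X20 : 0 <= X2 by apply: rootR_ge0.
have X10 : 0 <= X1 by apply: le_trans le21.
have -> : (X1 ^+ q)%:C * z1^* - (X2 ^+ q)%:C * z2^*
   = (X1 ^+ q)%:C * (z1 - z2)^* + (X1 ^+ q - X2 ^+ q)%:C * z2^*.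
  by rewrite !rmorphB /=; ring.
have Xq0 : 0 <= X1 ^+ q - X2 ^+ q by rewrite subr_ge0 lerXn2r.
apply: (le_trans (le_normcD _ _)).
rewrite !Normc.normcM !normc_real !normc_conj.
rewrite ger0_norm ?exprn_ge0 // ger0_norm //.
have := ler_subXX_mul q X20 le21 m_gt0.
rewrite !rootRK ?normc_ge0 // => le_sub.
have le_sub_z :
    (X1 ^+ q - X2 ^+ q) * normc z2 <= q%:R * X1 ^+ q * normc (z1 - z2).
  apply: le_trans le_sub _; rewrite ler_wpM2l ?mulr_ge0 ?exprn_ge0 //.
  exact: lerB_normc.
have le_X1 : X1 ^+ q <= (X1 + X2) ^+ q.
  by rewrite lerXn2r ?nnegrE ?addr_ge0 // lerDl.
have nz0 := normc_ge0 (z1 - z2).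
apply: le_trans (_ : q.+1%:R * X1 ^+ q * normc (z1 - z2) <= _).
  by rewrite -addn1 natrD; lra.
by rewrite ler_wpM2r ?normc_ge0 // ler_wpM2l.
Qed.

End RootConj.

(** * Discrete interpolation *)

Definition ubounded (R : numDomainType) (u : nat -> R) :=
  exists M, forall N, u N <= M.

Lemma ubounded_sum (R : numDomainType) (I : eqType) (s : seq I) (c : I -> R)
    (u : I -> nat -> R) :
  (forall i, 0 <= c i) -> (forall i, i \in s -> ubounded (u i)) ->
  ubounded (fun N => \sum_(i <- s) c i * u i N).
Proof.
move=> c0; elim: s => [|i s IH] u_bd; first by exists 0 => N; rewrite big_nil.
have [M1 leM1] := u_bd i (mem_head _ _).
have [M2 leM2] : ubounded (fun N => \sum_(i <- s) c i * u i N).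
  by apply: IH => i' si'; apply: u_bd; rewrite inE si' orbT.
by exists (c i * M1 + M2) => N; rewrite big_cons lerD // ler_wpM2l.
Qed.

Definition fdiff (V : zmodType) (j : nat) (a : nat -> V) : nat -> V :=
  iter j (fun b n => b n.+1 - b n) a.

Lemma fdiffS (V : zmodType) j (a : nat -> V) n :
  fdiff j.+1 a n = fdiff j a n.+1 - fdiff j a n.
Proof. by rewrite /fdiff iterS. Qed.

Lemma sumr_by_parts (R : comPzRingType) (v g : nat -> R) N :
  \sum_(n < N) (v n.+1 - v n) * g n =
  v N * g N - v 0%N * g 0%N - \sum_(n < N) v n.+1 * (g n.+1 - g n).
Proof.
elim: N => [|N IH]; first by rewrite !big_ord0; ring.
by rewrite !big_ord_recr /= IH; ring.
Qed.

Lemma normc_fdiff_le (R : rcfType) (a : nat -> R[i]) j n :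
  (forall n, normc (a n) <= 1) -> normc (fdiff j a n) <= 2 ^+ j.
Proof.
move=> a_le1; elim: j n => [|j IH] n; first by rewrite expr0 a_le1.
by rewrite fdiffS (le_trans (normcB_le _ _)) // exprS mulr2n mulrDl mul1r lerD.
Qed.

Lemma ubounded_sqr_fdiffS (R : rcfType) (a : nat -> R[i]) e :
  ubounded (fun N => \sum_(n < N) normc (fdiff e a n) ^+ 2) ->
  ubounded (fun N => \sum_(n < N) normc (fdiff e.+1 a n) ^+ 2).
Proof.
case=> M leM; exists (2 ^+ 2 * (M + M)) => N.
have le_term n : normc (fdiff e.+1 a n) ^+ 2 <=
    2 ^+ 2 * (normc (fdiff e a n.+1) ^+ 2 + normc (fdiff e a n) ^+ 2).
  rewrite fdiffS (le_trans _ (ler_exprD2 2 (normc_ge0 _) (normc_ge0 _))) //.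
  by rewrite lerXn2r ?nnegrE ?normc_ge0 ?addr_ge0 ?normc_ge0 ?normcB_le.
rewrite (le_trans (ler_sum _ (fun (n : 'I_N) _ => le_term n))) //.
rewrite -mulr_sumr big_split /= ler_pM2l ?exprn_gt0 //; apply: lerD (leM N).
rewrite (le_trans _ (leM N.+1)) // big_ord_recl /= lerDr //.
by rewrite exprn_ge0 ?normc_ge0.
Qed.

Section Interpolation.
Variables (R : realType) (a : nat -> R[i]) (d : nat).
Hypothesis d_gt0 : (0 < d)%N.
Hypothesis a_le1 : forall n, normc (a n) <= 1.

Local Notation W := (2 * d + 2)%N.

(* [energy j] are the partial sums of [|fdiff j a n|^(W / (min j d + 1))]:
   its boundedness says that the j-th difference of [a] lies in [l^(W/(j+1))]
   for [j <= d], and in [l^2] beyond. *)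
Definition rho j n := rootR (minn j d).+1 (normc (fdiff j a n)).
Definition energy j N := \sum_(n < N) rho j n ^+ W.

Lemma rho_ge0 j n : 0 <= rho j n.
Proof. exact: rootR_ge0. Qed.

Lemma rhoK j n : rho j n ^+ (minn j d).+1 = normc (fdiff j a n).
Proof. by rewrite rootRK ?normc_ge0. Qed.

Lemma rho_le j n : rho j n <= 1 + 2 ^+ j.
Proof.
rewrite (le_trans (ler_1Dexpr (rho_ge0 j n) (ltn0Sn (minn j d)))) //.
by rewrite lerD2l rhoK normc_fdiff_le.
Qed.

Lemma energy_ge0 j N : 0 <= energy j N.
Proof. by apply: sumr_ge0 => n _; rewrite exprn_ge0 ?rho_ge0. Qed.

Lemma energy_shift_le j N :
  \sum_(n < N) rho j n.+1 ^+ W <= energy j N + (1 + 2 ^+ j) ^+ W.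
Proof.
apply: (@le_trans _ _ (energy j N.+1)).
  by rewrite /energy big_ord_recl /= lerDr exprn_ge0 ?rho_ge0.
rewrite /energy big_ord_recr /= lerD2l lerXn2r ?rho_le ?nnegrE ?rho_ge0 //.
by rewrite addr_ge0 ?exprn_ge0.
Qed.

Lemma energy_sqr e N : (d <= e)%N ->
  energy e N = \sum_(n < N) normc (fdiff e a n) ^+ 2.
Proof.
move=> de; apply: eq_bigr => n _.
by rewrite (_ : W = (minn e d).+1 * 2)%N ?exprM ?rhoK // (minn_idPr de); lia.
Qed.

Section InterpolationStep.
Variable j : nat.
Hypothesis j2_le_d : (j.+2 <= d)%N.

Local Notation q := (2 * (d - j.+1))%N.
Let j1_le_d : (j.+1 <= d)%N := ltnW j2_le_d.
Let g n := rootXJ j.+2 q (fdiff j.+1 a n).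

Let rhoE i n : (i <= d)%N -> rho i n = rootR i.+1 (normc (fdiff i a n)).
Proof. by move=> id; rewrite /rho (minn_idPl id). Qed.

Lemma energy_by_parts N : (energy j.+1 N)%:C =
  fdiff j a N * g N - fdiff j a 0%N * g 0%N
  - \sum_(n < N) fdiff j a n.+1 * (g n.+1 - g n).
Proof.
rewrite -sumr_by_parts /energy rmorph_sum; apply: eq_bigr => n _ /=.
rewrite -fdiffS /g mul_rootXJ // -rhoE //.
by congr ((_ ^+ _)%:C); lia.
Qed.

Lemma normc_fdiff_weight_le n :
  normc (fdiff j a n * g n) <= 2 ^+ j * ((1 + 2 ^+ j.+1) ^+ q * 2 ^+ j.+1).
Proof.
rewrite /g /rootXJ !Normc.normcM normc_real normc_conj -rhoE //.
rewrite ger0_norm ?exprn_ge0 ?rho_ge0 //.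
apply: ler_pM;
  rewrite ?normc_fdiff_le ?mulr_ge0 ?exprn_ge0 ?rho_ge0 ?normc_ge0 //.
apply: ler_pM; rewrite ?normc_fdiff_le ?exprn_ge0 ?rho_ge0 ?normc_ge0 //.
by rewrite lerXn2r ?nnegrE ?rho_ge0 ?rho_le // addr_ge0 ?exprn_ge0.
Qed.

Lemma normc_weightB n : normc (g n.+1 - g n) <=
  q.+1%:R * (rho j.+1 n.+1 + rho j.+1 n) ^+ q * normc (fdiff j.+2 a n).
Proof. by rewrite [fdiff j.+2 a n]fdiffS !rhoE //; apply: normc_rootXJB. Qed.

(* Young's inequality splits each summation-by-parts term into a large
   multiple of the j-th energy plus a small multiple of the two neighbours. *)
Lemma by_parts_term_le n (s : R) : 0 < s -> s <= 1 ->
  normc (fdiff j a n.+1) * normc (g n.+1 - g n) <=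
  q.+1%:R * (s^-1 ^+ ((q + j.+3) * W) * rho j n.+1 ^+ W
    + s * (2 ^+ W * (rho j.+1 n.+1 ^+ W + rho j.+1 n ^+ W) + rho j.+2 n ^+ W)).
Proof.
move=> s0 s1.
have -> : normc (fdiff j a n.+1) = rho j n.+1 ^+ j.+1.
  by rewrite -rhoK (minn_idPl _) // ltnW.
apply: (le_trans (ler_wpM2l (exprn_ge0 _ (rho_ge0 _ _)) (normc_weightB n))).
rewrite -[normc (fdiff j.+2 a n)]rhoK (minn_idPl j2_le_d).
set x := rho j n.+1; set y := rho j.+1 n.+1 + rho j.+1 n; set z := rho j.+2 n.
have y0 : 0 <= y by rewrite addr_ge0 ?rho_ge0.
have := ler_expr3_sum_eps q j.+3 (rho_ge0 j n.+1) y0 (rho_ge0 j.+2 n) s0 s1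
  (ltn0Sn j).
rewrite (_ : j.+1 + q + j.+3 = W)%N; last by lia.
have := ler_exprD2 W (rho_ge0 j.+1 n.+1) (rho_ge0 j.+1 n); rewrite -/x -/y -/z.
have -> : x ^+ j.+1 * (q.+1%:R * y ^+ q * z ^+ j.+3) =
          q.+1%:R * (x ^+ j.+1 * y ^+ q * z ^+ j.+3) by ring.
move=> le_y le_xyz; rewrite ler_wpM2l // (le_trans le_xyz) // lerD2l.
by rewrite ler_pM2l // lerD2r.
Qed.

Lemma energy_interp_scaled (s : R) : 0 < s -> s <= 1 -> exists B, forall N,
  energy j.+1 N <= B + q.+1%:R * s^-1 ^+ ((q + j.+3) * W) * energy j N
    + q.+1%:R * s * (2 ^+ W.+1 * energy j.+1 N + energy j.+2 N).
Proof.
move=> s0 s1; set K := s^-1 ^+ _.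
have K0 : 0 <= K by rewrite exprn_ge0 // invr_ge0 ltW.
pose b := 2 ^+ j * ((1 + 2 ^+ j.+1) ^+ q * 2 ^+ j.+1) : R.
pose cj := (1 + 2 ^+ j) ^+ W : R; pose cj1 := (1 + 2 ^+ j.+1) ^+ W : R.
exists (b + b + q.+1%:R * K * cj + q.+1%:R * s * 2 ^+ W * cj1) => N.
have sum_le : normc (\sum_(n < N) fdiff j a n.+1 * (g n.+1 - g n)) <=
    q.+1%:R * (K * \sum_(n < N) rho j n.+1 ^+ W + s * (2 ^+ W *
      (\sum_(n < N) rho j.+1 n.+1 ^+ W + energy j.+1 N) + energy j.+2 N)).
  apply: (le_trans (normc_sum_le _ _)); under eq_bigr do rewrite Normc.normcM.
  apply: (le_trans (ler_sum _ (fun (n : 'I_N) _ => by_parts_term_le n s0 s1))).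
  rewrite -mulr_sumr big_split /= -!mulr_sumr big_split /= -mulr_sumr.
  by rewrite big_split.
have boundary_le : normc (fdiff j a N * g N - fdiff j a 0%N * g 0%N) <= b + b.
  by rewrite (le_trans (normcB_le _ _)) // lerD ?normc_fdiff_weight_le.
have energy_le : energy j.+1 N <=
    b + b + normc (\sum_(n < N) fdiff j a n.+1 * (g n.+1 - g n)).
  rewrite -[energy j.+1 N]ger0_norm ?energy_ge0 // -normc_real energy_by_parts.
  by rewrite (le_trans (normcB_le _ _)) // lerD2r.
have q0 : 0 <= q.+1%:R :> R by [].
have := energy_shift_le j N; rewrite -/cj => shift_le.
have := energy_shift_le j.+1 N; rewrite -/cj1 => shift1_le.
have := ler_wpM2l (mulr_ge0 q0 K0) shift_le.
have qs0 : 0 <= q.+1%:R * s * 2 ^+ W by rewrite !mulr_ge0 ?exprn_ge0 // ltW.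
have := ler_wpM2l qs0 shift1_le.
rewrite exprS; lra.
Qed.

(* Choosing the weight [s] small absorbs the [energy j.+1] term on the right. *)
Lemma energy_interp (eps : R) : 0 < eps -> exists B K, 0 <= K /\ forall N,
  energy j.+1 N <= B + K * energy j N + eps * energy j.+2 N.
Proof.
move=> eps0; pose c := q.+1%:R * 2 ^+ W.+1 : R.
have q_le_c : q.+1%:R <= c by rewrite ler_peMr ?exprn_ege1 ?ler1n.
have c2 : 0 < 2 * c by rewrite !mulr_gt0 ?exprn_gt0.
pose s := Num.min 1 (Num.min (eps / (2 * c)) (2 * c)^-1).
have s0 : 0 < s by rewrite !lt_min ltr01 divr_gt0 ?invr_gt0.
have s_eps : s * (2 * c) <= eps.
  by rewrite -(ler_pdivlMr _ _ c2) /s !ge_min lexx !orbT.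
have s_half : s * (2 * c) <= 1.
  by rewrite -(ler_pdivlMr _ _ c2) div1r /s !ge_min lexx !orbT.
have s1 : s <= 1 by rewrite /s ge_min lexx.
have [B le_B] := energy_interp_scaled s0 s1.
exists (2 * B), (2 * (q.+1%:R * s^-1 ^+ ((q + j.+3) * W))).
split=> [|N]; first by rewrite !mulr_ge0 // exprn_ge0 // invr_ge0 ltW.
have cs_half : c * s <= 1 / 2 by lra.
have qs_eps : q.+1%:R * s <= eps / 2.
  by apply: le_trans (ler_wpM2r (ltW s0) q_le_c) _; lra.
have := ler_wpM2r (energy_ge0 j.+1 N) cs_half.
have := ler_wpM2r (energy_ge0 j.+2 N) qs_eps.
have := le_B N; rewrite /c; lra.
Qed.

End InterpolationStep.

Hypothesis a_lW : ubounded (fun N => \sum_(n < N) normc (a n) ^+ W).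
Hypothesis fdiff_l2 : ubounded (fun N => \sum_(n < N) normc (fdiff d a n) ^+ 2).

Lemma energy_dominated i j : (j + i.+1 = d)%N ->
  exists D E, 0 <= E /\ forall N, energy j.+1 N <= D + E * energy j N.
Proof.
elim: i j => [|i IH] j ij_d.
  have [M leM] := fdiff_l2; exists M, 0; split=> // N.
  have jd : j.+1 = d by rewrite -ij_d addn1.
  by rewrite mul0r addr0 jd energy_sqr ?leqnn.
have [D [E [E0 le_E]]] := IH j.+1 (etrans (addSnnS _ _) ij_d).
pose eps := (2 * (E + 1))^-1.
have eps0 : 0 < eps by rewrite invr_gt0 mulr_gt0 // ltr_pwDr.
have epsE : eps * E <= 1 / 2.
  by rewrite /eps mulrC ler_pdivrMr ?mulr_gt0 ?ltr_pwDr //; lra.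
have j2_le_d : (j.+2 <= d)%N by rewrite -ij_d; lia.
have [B [K [K0 le_BK]]] := energy_interp j2_le_d eps0.
exists (2 * (B + eps * D)), (2 * K); split=> [|N]; first by rewrite mulr_ge0.
have := ler_wpM2r (energy_ge0 j.+1 N) epsE.
have := ler_wpM2l (ltW eps0) (le_E N).
have := le_BK N; have := energy_ge0 j.+1 N; lra.
Qed.

Lemma energy_bounded j : ubounded (energy j).
Proof.
have [le_jd|lt_dj] := leqP j d; last first.
  have sqr_bd i :
      ubounded (fun N => \sum_(n < N) normc (fdiff (d + i) a n) ^+ 2).
    elim: i => [|i]; first by rewrite addn0.
    by rewrite addnS; apply: ubounded_sqr_fdiffS.
  have [M leM] := sqr_bd (j - d)%N; rewrite subnKC ?(ltnW lt_dj) // in leM.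
  by exists M => N; rewrite energy_sqr ?(ltnW lt_dj).
elim: j le_jd => [|j IH] le_jd.
  have [M leM] := a_lW; exists M => N; rewrite /energy.
  by under eq_bigr do rewrite /rho min0n (rootR1 (normc_ge0 _)); apply: leM.
have [M leM] := IH (ltnW le_jd).
have [|D [E [E0 le_DE]]] := @energy_dominated (d - j.+1) j; first by lia.
by exists (D + E * M) => N; rewrite (le_trans (le_DE N)) // lerD2l ler_wpM2l.
Qed.

Section ProductBound.
Variables (K : nat) (e : 'I_K -> nat).
Hypothesis W_le : (W <= \sum_i (minn (e i) d).+1)%N.

(* Compare every factor [rho (e i) n ^+ (minn (e i) d).+1] with a power of the
   sum of all the [rho (e i) n]. *)
Lemma prod_normc_fdiff_le n : \prod_i normc (fdiff (e i) a n) <=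
  (\sum_i (1 + 2 ^+ e i)) ^+ (\sum_i (minn (e i) d).+1 - W) * 2 ^+ (W * K)
  * \sum_i rho (e i) n ^+ W.
Proof.
set T := \sum_i _; set S := \sum_i rho (e i) n.
have S0 : 0 <= S by apply: sumr_ge0 => i _; apply: rho_ge0.
have le_prod :
    \prod_i normc (fdiff (e i) a n) <= \prod_i S ^+ (minn (e i) d).+1.
  apply: ler_prod => i _; rewrite normc_ge0 -rhoK lerXn2r ?nnegrE ?rho_ge0 //.
  by rewrite /S (bigD1 i) //= lerDl sumr_ge0 // => i' _; apply: rho_ge0.
apply: (le_trans le_prod); rewrite prodrXr -{1}(subnK W_le) exprD -mulrA.
rewrite ler_pM ?exprn_ge0 ?lerXn2r ?nnegrE ?(le_trans S0) ?ler_sum //.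
- by move=> i _; apply: rho_le.
- by move=> i _; apply: rho_le.
by apply: ler_expr_sum => [|i]; [lia | apply: rho_ge0].
Qed.

Lemma sum_prod_normc_fdiff_bounded :
  ubounded (fun N => \sum_(n < N) \prod_i normc (fdiff (e i) a n)).
Proof.
pose c := (\sum_i (1 + 2 ^+ e i)) ^+ (\sum_i (minn (e i) d).+1 - W)
  * 2 ^+ (W * K) : R.
have c0 : 0 <= c.
  by rewrite mulr_ge0 ?exprn_ge0 ?sumr_ge0 // => i _;
    rewrite addr_ge0 ?exprn_ge0.
have [M leM] := ubounded_sum (fun=> c0)
  (fun i (_ : i \in index_enum 'I_K) => energy_bounded (e i)).
exists M => N; apply: le_trans (leM N).
rewrite -mulr_sumr /energy exchange_big mulr_sumr ler_sum // => n _.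
by rewrite mulr_sumr (le_trans (prod_normc_fdiff_le n)) // -mulr_sumr.
Qed.

End ProductBound.

End Interpolation.

Section ShiftSub.
Variable R : comNzRingType.

Definition shift_sub (c : R) (f : nat -> R) : nat -> R :=
  fun n => f n.+1 - c * f n.

Lemma iter_shift_sub_translate (c : R) j (b : nat -> R) n l :
  iter j (shift_sub c) (fun l => b (n + l)%N) l
  = iter j (shift_sub c) b (n + l)%N.
Proof.
by elim: j l => [|j IH] l //; rewrite !iterS /shift_sub /= !IH addnS.
Qed.

(* [S - c] is conjugate to the plain difference operator by the modulation
   [b n |-> c' ^+ n * b n], where [c'] is the inverse of [c]. *)
Lemma iter_shift_sub_modulate (c c' : R) j (b : nat -> R) n : c * c' = 1 ->
  iter j (shift_sub c) b n = c ^+ (n + j) * fdiff j (fun n => c' ^+ n * b n) n.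
Proof.
move=> cc'; elim: j n => [|j IH] n.
  by rewrite addn0 /= mulrA -exprMn cc' expr1n mul1r.
by rewrite fdiffS iterS /shift_sub !IH !addnS !exprS; ring.
Qed.

End ShiftSub.

(** * Umbral evaluation of polynomials *)

Section MpolyFunctional.
Variables (R : comNzRingType) (K : nat).
Implicit Types (P Q : {mpoly R[K]}) (T : 'X_{1..K} -> R).

Definition mlinear T P := \sum_(m <- msupp P) P@_m * T m.

Lemma mlinearE T P w : (msize P <= w)%N ->
  mlinear T P = \sum_(m : 'X_{1..K < w}) P@_m * T m.
Proof.
move=> le_Pw; rewrite /mlinear (big_mksub 'X_{1..K < w}) ?msupp_uniq //=.
  by rewrite big_rmcond //= => m /memN_msupp_eq0 ->; rewrite mul0r.
by move=> m /msize_mdeg_lt /leq_trans; apply.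
Qed.

Lemma mlinear_is_zmod_morphism T : zmod_morphism (mlinear T).
Proof.
move=> P Q; pose w := (maxn (msize P) (msize Q)).+1.
have le_Pw : (msize P <= w)%N by rewrite leqW // leq_maxl.
have le_Qw : (msize Q <= w)%N by rewrite leqW // leq_maxr.
have le_PQw : (msize (P - Q) <= w)%N.
  by rewrite (leq_trans (msizeD_le _ _)) // msizeN geq_max le_Pw le_Qw.
rewrite !(mlinearE _ le_Pw, mlinearE _ le_Qw, mlinearE _ le_PQw) -sumrB.
by apply: eq_bigr => m _; rewrite mcoeffB mulrBl.
Qed.

HB.instance Definition _ T := GRing.isZmodMorphism.Build {mpoly R[K]} R
  (mlinear T) (mlinear_is_zmod_morphism T).

Lemma mlinearB T : {morph mlinear T : P Q / P - Q}.
Proof. exact: raddfB. Qed.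

Lemma mlinear_sum T (I : Type) (r : seq I) (F : I -> {mpoly R[K]}) :
  mlinear T (\sum_(i <- r) F i) = \sum_(i <- r) mlinear T (F i).
Proof. exact: raddf_sum. Qed.

Lemma mlinearZ T c P : mlinear T (c *: P) = c * mlinear T P.
Proof.
have le_P : (msize P <= msize P)%N by [].
have le_cP : (msize (c *: P) <= msize P)%N by apply: msizeZ_le.
rewrite (mlinearE _ le_P) (mlinearE _ le_cP) mulr_sumr.
by apply: eq_bigr => m _; rewrite mcoeffZ mulrA.
Qed.

Lemma mlinear1 T : mlinear T 1 = T 0%MM.
Proof. by rewrite /mlinear msupp1 big_seq1 mcoeff1 eqxx mul1r. Qed.

Lemma eq_mlinear T1 T2 P : T1 =1 T2 -> mlinear T1 P = mlinear T2 P.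
Proof. by move=> eqT; apply: eq_bigr => m _; rewrite eqT. Qed.

Lemma mlinearMX T P i :
  mlinear T (P * 'X_i) = mlinear (fun m => T (m + U_(i))%MM) P.
Proof.
rewrite /mlinear (perm_big _ (msuppMX P U_(i))) big_map.
by apply: eq_bigr => m _; rewrite mcoeffMX addmC.
Qed.

Lemma mlinear_funBZ T1 T2 c P :
  mlinear (fun m => T1 m - c * T2 m) P = mlinear T1 P - c * mlinear T2 P.
Proof. by rewrite /mlinear mulr_sumr -sumrB; apply: eq_bigr => m _; ring. Qed.

Definition mtensor (t : 'I_K -> nat -> R) (m : 'X_{1..K}) := \prod_i t i (m i).

Lemma mtensorDU t i c m :
  mtensor t (m + U_(i))%MM - c * mtensor t m =
  mtensor (fun i' => if i' == i then shift_sub c (t i) else t i') m.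
Proof.
rewrite /mtensor (bigD1 i) //= [X in _ - c * X](bigD1 i) //= [RHS](bigD1 i) //=.
rewrite eqxx mnmDE mnm1E eqxx addn1 /shift_sub mulrBl mulrA.
congr (_ * _ - _ * _); apply: eq_bigr => i' /negbTE i'i; rewrite i'i //.
by rewrite mnmDE mnm1E eq_sym i'i addn0.
Qed.

(* The functional [mlinear (mtensor t)] turns [X_i - c_i] into the operator
   [S - c_i] acting on the i-th factor. *)
Lemma mlinear_mtensor_mmap1 (c : 'I_K -> R) t m :
  mlinear (mtensor t) (mmap1 (fun i => 'X_i - (c i)%:MP) m) =
  \prod_i iter (m i) (shift_sub (c i)) (t i) 0%N.
Proof.
elim: {m}(mdeg m) {-2}m (erefl (mdeg m)) t => [|s IH] m degm t.
  have -> : m = 0%MM by apply/eqP; rewrite -mdeg_eq0 degm.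
  by rewrite mmap11 mlinear1; apply: eq_bigr => i _; rewrite mnm0E.
have [i mi_gt0] : exists i, (0 < m i)%N.
  apply/existsP; apply: contraT; rewrite negb_exists => /forallP m0.
  move: degm; rewrite mdegE big1 // => i _.
  by apply/eqP; rewrite -leqn0 leqNgt m0.
have {mi_gt0}[m' em] : exists m', m = (m' + U_(i))%MM.
  exists (m - U_(i))%MM; rewrite submK //; apply/mnm_lepP => i'; rewrite mnm1E.
  by case: eqVneq => [<-|].
subst m; move: degm; rewrite mdegD mdeg1 addn1 => -[degm'].
rewrite commr_mmap1_M; last by move=> ? ?; apply: mulrC.
rewrite mmap1U mulrBr [_ * (c i)%:MP]mulrC mul_mpolyC mlinearB mlinearMX.
rewrite mlinearZ -mlinear_funBZ.
rewrite (eq_mlinear _ (mtensorDU t i (c i))) IH //; apply: eq_bigr => i' _.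
rewrite mnmDE mnm1E; case: (eqVneq i' i) => [->|i'i]; last by rewrite addn0.
by rewrite addn1 iterSr.
Qed.

End MpolyFunctional.

Section TaylorExpansion.
Variables (R : comNzRingType) (K : nat).

Lemma comp_mpolyA k (lp : K.-tuple {mpoly R[K]}) (lq : K.-tuple {mpoly R[k]})
    (P : {mpoly R[K]}) :
  (P \mPo lp) \mPo lq = P \mPo [tuple tnth lp i \mPo lq | i < K].
Proof.
rewrite (comp_mpolyE P lp) (comp_mpolyE P) raddf_sum /=; apply: eq_bigr => m _.
rewrite comp_mpolyZ rmorph_prod; congr (_ *: _); apply: eq_bigr => i _.
by rewrite rmorphXn tnth_mktuple.
Qed.

Lemma comp_mpoly_translateK (c : 'I_K -> R) (P : {mpoly R[K]}) :
  (P \mPo [tuple 'X_i + (c i)%:MP | i < K])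
    \mPo [tuple 'X_i - (c i)%:MP | i < K] = P.
Proof.
rewrite comp_mpolyA -[RHS]comp_mpoly_id; congr (_ \mPo _).
apply: eq_from_tnth => i; rewrite !tnth_mktuple comp_mpolyD comp_mpolyXU.
by rewrite comp_mpolyC -tnth_nth tnth_mktuple subrK.
Qed.

Lemma mlinear_mtensor_taylor (c : 'I_K -> R) t (P : {mpoly R[K]}) :
  let G := P \mPo [tuple 'X_i + (c i)%:MP | i < K] in
  mlinear (mtensor t) P =
  \sum_(m <- msupp G) G@_m * \prod_i iter (m i) (shift_sub (c i)) (t i) 0%N.
Proof.
move=> G; rewrite -[in LHS](comp_mpoly_translateK c P) -/G comp_mpolyE.
rewrite mlinear_sum; apply: eq_bigr => m _; rewrite mlinearZ.
rewrite -mlinear_mtensor_mmap1; congr (_ * mlinear _ _).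
by apply: eq_bigr => i _; rewrite tnth_mktuple.
Qed.

End TaylorExpansion.

(** * The sequence [phi F] *)

Section Phi.
Variable R : realType.
Local Notation C := R[i].

Lemma normc_expi (t : R) : normc (expi t) = 1.
Proof. by rewrite /= cos2Dsin2 sqrtr1. Qed.

Lemma expiJ (t : R) : expi t = (expi (- t))^*.
Proof. by rewrite /expi /= cosN sinN opprK. Qed.

Lemma mul_expiN (t : R) : expi (- t) * expi t = 1.
Proof. by rewrite [expi t]expiJ mulcJ_normc normc_expi expr1n. Qed.

Lemma iter_shift_sub_conj (c : C) j (b : nat -> C) n l :
  iter j (shift_sub (conjc c)) (fun l => (b (n + l)%N)^*) l
  = (iter j (shift_sub c) b (n + l)%N)^*.
Proof.
elim: j l => [|j IH] l //.
by rewrite !iterS /shift_sub /= !IH rmorphB rmorphM addnS.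
Qed.

Lemma normc_iter_shift_sub_expi (t : R) j (b : nat -> C) n :
  normc (iter j (shift_sub (expi (- t))) b n)
  = normc (fdiff j (fun n => expi t ^+ n * b n) n).
Proof.
rewrite (iter_shift_sub_modulate _ _ _ (mul_expiN t)) Normc.normcM normcX.
by rewrite normc_expi expr1n mul1r.
Qed.

Variables (k : nat) (alpha : nat -> C).

Definition phi_factor n (i : 'I_(k + k)) : nat -> C :=
  match split i with
  | inl _ => fun l => alpha (n + l)%N
  | inr _ => fun l => (alpha (n + l)%N)^*
  end.

Lemma phi_mlinear (F : {mpoly C[k + k]}) n :
  phi alpha F n = mlinear (mtensor (phi_factor n)) F.
Proof.
apply: eq_bigr => m _; congr (_ * _).
rewrite /mtensor big_split_ord /= -big_split /=; apply: eq_bigr => p _.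
by rewrite /phi_factor /xvar /yvar !(unsplitK (inl p : 'I_k + 'I_k),
  unsplitK (inr p : 'I_k + 'I_k)).
Qed.

Lemma normc_phi_factor (theta : R) n j i :
  normc (iter j (shift_sub (taylor_point theta i)) (phi_factor n i) 0%N) =
  normc (fdiff j (fun n => expi theta ^+ n * alpha n) n).
Proof.
rewrite /taylor_point /phi_factor; case: (split i) => p /=.
  by rewrite iter_shift_sub_translate addn0 normc_iter_shift_sub_expi.
rewrite {1}expiJ iter_shift_sub_conj normc_conj addn0.
exact: normc_iter_shift_sub_expi.
Qed.

Lemma normc_phi_le (theta : R) (F : {mpoly C[k + k]}) n :
  normc (phi alpha F n) <=
  \sum_(m <- msupp (taylor_shift theta F)) normc (taylor_shift theta F)@_m
    * \prod_i normc (fdiff (m i) (fun n => expi theta ^+ n * alpha n) n).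
Proof.
rewrite phi_mlinear (mlinear_mtensor_taylor (taylor_point theta)).
apply: (le_trans (normc_sum_le _ _)); apply: ler_sum => m _.
rewrite Normc.normcM normc_prod; under eq_bigr do rewrite normc_phi_factor.
exact: lexx.
Qed.

End Phi.

Lemma bigminn_le (X : eqType) (f : X -> nat) x0 s x : x \in x0 :: s ->
  (\big[minn/f x0]_(y <- s) f y <= f x)%N.
Proof.
elim: s => [|y s IH]; first by rewrite inE big_nil => /eqP->.
rewrite big_cons geq_min !inE => /or3P[x0x|/eqP->|xs].
- by rewrite IH ?orbT // inE x0x.
- by rewrite leqnn.
- by rewrite IH ?orbT // inE xs orbT.
Qed.

Lemma L2k_le_Lweight (R : realType) k (theta : R) d
    (F : {mpoly R[i][k + k]}) m :
  m \in msupp (taylor_shift theta F) -> (L2k theta d F <= Lweight d m)%N.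
Proof.
rewrite /L2k; case: (msupp _) => [|m0 s] //= m_in.
exact: (bigminn_le (Lweight d)).
Qed.

Lemma Lweight_sum k d (m : 'X_{1..k + k}) :
  Lweight d m = (\sum_(i < k + k) minn (m i) d)%N.
Proof. by rewrite /Lweight big_split_ord big_split. Qed.

Lemma taylor_monomial_weight (R : realType) k (theta : R) d
    (F : {mpoly R[i][k + k]}) m :
  ((2 * (d + 1))%:Z - (2 * k)%:Z <= (L2k theta d F)%:Z)%R ->
  m \in msupp (taylor_shift theta F) ->
  (2 * d + 2 <= \sum_(i < k + k) (minn (m i) d).+1)%N.
Proof.
rewrite lerBlDr -PoszD lez_nat mulnDr => L_ge /(L2k_le_Lweight d).
rewrite Lweight_sum => L_le; under eq_bigr do rewrite -addn1.
rewrite big_split sum1_card card_ord /= (leq_trans L_ge) //.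
by rewrite mul2n -addnn leq_add2r.
Qed.

Lemma in_lp_ubounded (R : realType) p (b : nat -> R[i]) :
  in_lp p b -> ubounded (fun N => \sum_(n < N) normc (b n) ^+ p).
Proof.
case=> M leM; exists (complex.Re M) => N; move: (leM N).
rewrite (_ : \sum_(n < N) _ = (\sum_(n < N) normc (b n) ^+ p)%:C).
  by rewrite lecE => /andP[].
by rewrite rmorph_sum; apply: eq_bigr => n _; rewrite normcE rmorphXn.
Qed.

Unset Implicit Arguments.

Theorem lemma15 (R : realType) (theta : R) (d k : nat) (alpha : nat -> R[i])
  (F : {mpoly R[i][k + k]}) :
  0 <= theta < 2 * pi ->
  (0 < d)%N -> (0 < k)%N ->
  (forall n, `|alpha n| < 1) ->
  in_lp 2 (shift_sub_pow (expi (- theta)) d alpha) ->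
  in_lp (2 * d + 2) alpha ->
  F != 0 ->
  ((2 * (d + 1))%:Z - (2 * k)%:Z <= (L2k theta d F)%:Z)%R ->
  exists M : R[i], forall N : nat, `|\sum_(n < N.+1) phi alpha F n| <= M.
Proof.
move=> _ d_gt0 _ alpha_lt1 fdiff_l2 alpha_lW _ L_ge.
pose a n := expi theta ^+ n * alpha n.
have normc_a n : normc (a n) = normc (alpha n).
  by rewrite Normc.normcM normcX normc_expi expr1n mul1r.
have a_le1 n : normc (a n) <= 1 by rewrite normc_a -lecR -normcE ltW.
have a_lW : ubounded (fun N => \sum_(n < N) normc (a n) ^+ (2 * d + 2)).
  have [M leM] := in_lp_ubounded alpha_lW.
  by exists M => N; under eq_bigr do rewrite normc_a.
have a_l2 : ubounded (fun N => \sum_(n < N) normc (fdiff d a n) ^+ 2).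
  have [M leM] := in_lp_ubounded fdiff_l2.
  by exists M => N; under eq_bigr do rewrite -normc_iter_shift_sub_expi.
have [M leM] := ubounded_sum (fun m => normc_ge0 (taylor_shift theta F)@_m)
  (fun m mF => sum_prod_normc_fdiff_bounded d_gt0 a_le1 a_lW a_l2
    (taylor_monomial_weight L_ge mF)).
exists M%:C => N; rewrite normcE lecR (le_trans (normc_sum_le _ _)) //.
apply: le_trans (leM N.+1).
have le_phi n := normc_phi_le alpha theta F n.
apply: le_trans (ler_sum _ (fun (n : 'I_N.+1) _ => le_phi n)) _.
by rewrite exchange_big /=; apply: ler_sum => m _; rewrite mulr_sumr lexx.
Qed.
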